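(* Let $G_1,G_2$ be cubic graphs with $K'(G_1,3)=a$ and $K'(G_2,3)=b$. Then for any composition $G_1\,Y\,G_2$ and any composition $G_1\,H\,G_2$ (with any choices of distinguished vertices/edges and identifications), $K'(G_1\,Y\,G_2,3)=K'(G_1\,H\,G_2,3)=ab$.
   Context: Graphs are finite; multiple edges allowed, loops not. Compositions of cubic graphs $G_1,G_2$: (Y) choose a vertex $v_1\in G_1$ with incident edges $v_1s_{11},v_1s_{12},v_1s_{13}$ and a vertex $v_2\in G_2$ with incident edges $v_2s_{21},v_2s_{22},v_2s_{23}$ (in a chosen order); $G_1\,Y\,G_2$ is obtained from the disjoint union by deleting $v_1,v_2$ and adding the edges $s_{1j}s_{2j}$, $j=1,2,3$. (H) choose an edge $s_{11}s_{12}$ of $G_1$ and an edge $s_{21}s_{22}$ of $G_2$; $G_1\,H\,G_2$ is obtained from the disjoint union by deleting these two edges and adding the edges $s_{11}s_{21}$ and $s_{12}s_{22}$. A proper $3$-edge coloring assigns colors from $\{1,2,3\}$ to edges so that adjacent edges get different colors. An edge-Kempe chain (for colors $a\ne b$) is a connected component of the subgraph of edges colored $a$ or $b$; an edge-Kempe switch swaps $a,b$ on one chain. Colorings are edge-Kempe equivalent if related by a finite sequence of switches; $K'(G,3)$ is the number of equivalence classes of proper $3$-edge colorings of $G$. *)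

From mathcomp Require Import all_boot.
Set Implicit Arguments. Unset Strict Implicit. Unset Printing Implicit Defensive.

(* A finite multigraph: a finite vertex type, a finite edge type, and for each
   edge its (ordered pair of) endpoints.  Loops are excluded by [loopless]. *)
Record mgraph := MGraph {
  vert : finType;
  edge : finType;
  endpt : edge -> vert * vert }.

Section Basic.
Variable G : mgraph.

Definition inc (e : edge G) (v : vert G) : bool :=
  (v == (endpt e).1) || (v == (endpt e).2).

Definition loopless : bool := [forall e : edge G, (endpt e).1 != (endpt e).2].

Definition deg (v : vert G) : nat := #|[set e : edge G | inc e v]|.

Definition cubic : bool := loopless && [forall v : vert G, deg v == 3].

Definition other (e : edge G) (v : vert G) : vert G :=
  if (endpt e).1 == v then (endpt e).2 else (endpt e).1.

Definition coloring := {ffun edge G -> 'I_3}.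

Definition adjacent (e f : edge G) : bool :=
  (e != f) && [exists v : vert G, inc e v && inc f v].

Definition proper (c : coloring) : bool :=
  [forall e : edge G, forall f : edge G, adjacent e f ==> (c e != c f)].

(* two edges coloured a or b sharing an endpoint; the connected components of
   this relation (through [connect]) are the edge-Kempe chains *)
Definition chain_rel (c : coloring) (a b : 'I_3) : rel (edge G) :=
  fun e f => [&& c e \in [:: a; b], c f \in [:: a; b] &
                 [exists v : vert G, inc e v && inc f v]].

Definition swap (a b x : 'I_3) : 'I_3 :=
  if x == a then b else if x == b then a else x.

Definition kswitch (c : coloring) (a b : 'I_3) (e : edge G) : coloring :=
  [ffun f => if connect (chain_rel c a b) e f then swap a b (c f) else c f].

Definition kempe_step : rel coloring := fun c d =>
  [exists a : 'I_3, exists b : 'I_3, exists e : edge G,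
     [&& a != b, c e \in [:: a; b] & d == kswitch c a b e]].

Definition kempe_equiv (c d : coloring) : bool := connect kempe_step c d.

Definition Kprime : nat :=
  #|[set [set d | kempe_equiv c d] | c in [set c : coloring | proper c]]|.

Lemma not_inc_fst (e : edge G) (v : vert G) : ~~ inc e v -> (endpt e).1 != v.
Proof. by rewrite /inc negb_or eq_sym => /andP[]. Qed.

Lemma not_inc_snd (e : edge G) (v : vert G) : ~~ inc e v -> (endpt e).2 != v.
Proof. by rewrite /inc negb_or [v == _.2]eq_sym => /andP[]. Qed.

Lemma other_neq (e : edge G) (v : vert G) :
  inc e v -> (endpt e).1 != (endpt e).2 -> other e v != v.
Proof.
rewrite /inc /other; case: (endpt e) => x y /=.
case/orP=> /eqP -> hxy; first by rewrite eqxx eq_sym.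
by rewrite (negbTE hxy).
Qed.

End Basic.

(* Data for a Y-composition at a graph G: a vertex v and an ordering
   (injective enumeration) of three edges incident with v (all of them, when G
   is cubic); the side condition yf_noloop holds automatically in a loopless graph. *)
Record ydata (G : mgraph) := YData {
  yv : vert G;
  yf : 'I_3 -> edge G;
  yf_inj : injective yf;
  yf_inc : forall j, inc (yf j) yv;
  yf_noloop : forall j, (endpt (yf j)).1 != (endpt (yf j)).2 }.

Section YComp.
Variables (G1 G2 : mgraph) (d1 : ydata G1) (d2 : ydata G2).

Definition Yvert : finType :=
  ({x : vert G1 | x != yv d1} + {x : vert G2 | x != yv d2})%type.

Definition Yedge : finType :=
  ({e : edge G1 | ~~ inc e (yv d1)} + {e : edge G2 | ~~ inc e (yv d2)}
    + 'I_3)%type.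

Definition Yendpt (e : Yedge) : Yvert * Yvert :=
  match e with
  | inl (inl (exist e He)) =>
      (inl (exist _ (endpt e).1 (not_inc_fst He)),
       inl (exist _ (endpt e).2 (not_inc_snd He)))
  | inl (inr (exist e He)) =>
      (inr (exist _ (endpt e).1 (not_inc_fst He)),
       inr (exist _ (endpt e).2 (not_inc_snd He)))
  | inr j =>
      (inl (exist _ (other (yf d1 j) (yv d1))
                   (other_neq (yf_inc d1 j) (yf_noloop d1 j))),
       inr (exist _ (other (yf d2 j) (yv d2))
                   (other_neq (yf_inc d2 j) (yf_noloop d2 j))))
  end.

Definition Ycomp : mgraph := @MGraph Yvert Yedge Yendpt.
End YComp.

Section HComp.
Variables (G1 G2 : mgraph).
(* e1 = s11 s12 in G1, e2 = s21 s22 in G2; the booleans choose which endpoint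
   of the edge is s_{i1} (flip = false: s_{i1} = first stored endpoint). *)
Variables (e1 : edge G1) (flip1 : bool) (e2 : edge G2) (flip2 : bool).

Definition oends (G : mgraph) (e : edge G) (flip : bool) : vert G * vert G :=
  if flip then ((endpt e).2, (endpt e).1) else endpt e.

Definition Hvert : finType := (vert G1 + vert G2)%type.

Definition Hedge : finType :=
  ({e : edge G1 | e != e1} + {e : edge G2 | e != e2} + bool)%type.

Definition Hendpt (e : Hedge) : Hvert * Hvert :=
  match e with
  | inl (inl (exist e _)) => (inl (endpt e).1, inl (endpt e).2)
  | inl (inr (exist e _)) => (inr (endpt e).1, inr (endpt e).2)
  | inr false => (inl (oends e1 flip1).1, inr (oends e2 flip2).1)
  | inr true => (inl (oends e1 flip1).2, inr (oends e2 flip2).2)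
  end.

Definition Hcomp : mgraph := @MGraph Hvert Hedge Hendpt.
End HComp.

From mathcomp Require Import all_boot all_fingroup.
Set Implicit Arguments. Unset Strict Implicit. Unset Printing Implicit Defensive.

(* In a proper 3-edge-colouring of a cubic graph every colour class is a perfect matching, so
   each colour meets an edge cut as often as the parity of either side dictates.  Hence the three
   cut edges of G1 Y G2 carry three different colours and the two cut edges of G1 H G2 carry the
   same colour.  Restricting to G1 and to G2 thus determines a colouring of the composite up to a
   permutation of the colours on one side; a Kempe switch of the composite restricts to Kempe
   switches of both sides, and a Kempe switch of one side lifts to the composite (after
   complementing the switched set if it meets the cut) while changing the other side only by a
   renaming of colours.  Since renamings are products of Kempe switches, Kempe classes of the
   composite correspond to pairs of Kempe classes of G1 and G2. *)

(** * Kempe switches *)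

Definition in_ab (a b x : 'I_3) : bool := x \in [:: a; b].

Lemma swapK (a b : 'I_3) : involutive (swap a b).
Proof. by move=> x; apply/eqP; move: a b x; do 3!case=> [[|[|[|?]]] ?]. Qed.

Lemma swap_inj (a b : 'I_3) : injective (swap a b).
Proof. exact: inv_inj (swapK a b). Qed.

Lemma in_ab_swap (a b x : 'I_3) : in_ab a b (swap a b x) = in_ab a b x.
Proof. by move: a b x; do 3!case=> [[|[|[|?]]] ?]. Qed.

Lemma swap_out (a b x : 'I_3) : ~~ in_ab a b x -> swap a b x = x.
Proof. by rewrite /in_ab /swap !inE negb_or => /andP[/negbTE-> /negbTE->]. Qed.

Lemma swapxx (a x : 'I_3) : swap a a x = x.
Proof. by rewrite /swap; case: eqP => // ->. Qed.

Lemma swap_tperm (a b x : 'I_3) : swap a b x = tperm a b x.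
Proof.
by rewrite /swap; case: tpermP => [->|->|/eqP/negbTE-> /eqP/negbTE->]; rewrite ?eqxx //;
  case: eqP => [->|].
Qed.

Section KempeSwitch.
Variable G : mgraph.
Implicit Types (c d : coloring G) (a b : 'I_3) (S T : {set edge G}) (e f : edge G) (v : vert G).

Definition switch c a b S : coloring G :=
  [ffun f => if f \in S then swap a b (c f) else c f].

Definition recolor (pi : 'I_3 -> 'I_3) c : coloring G := [ffun f => pi (c f)].

(* S contains, with any (a,b)-coloured edge, its whole (a,b)-Kempe chain *)
Definition kclosed c a b S : bool :=
  [forall v, forall e, forall f,
     [&& inc e v, inc f v, in_ab a b (c e) & in_ab a b (c f)] ==> ((e \in S) == (f \in S))].

Lemma kclosedP c a b S :
  reflect (forall v e f, inc e v -> inc f v -> in_ab a b (c e) -> in_ab a b (c f) ->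
             (e \in S) = (f \in S))
          (kclosed c a b S).
Proof.
apply: (iffP forallP) => [cl v e f ev fv ae af | cl v].
  by move/forallP/(_ e)/forallP/(_ f): (cl v); rewrite ev fv ae af => /eqP.
by do 2!apply/forallP=> ?; apply/implyP=> /and4P[ev fv ae af]; rewrite (cl v _ _ ev fv ae af).
Qed.

Lemma kclosedT c a b : kclosed c a b setT.
Proof. by apply/kclosedP=> v e f; rewrite !inE. Qed.

Lemma kclosedC c a b S : kclosed c a b S -> kclosed c a b (~: S).
Proof. by move/kclosedP=> cl; apply/kclosedP=> v e f ev fv ae af; rewrite !inE (cl v e f). Qed.

Lemma kclosedD c a b S T : kclosed c a b S -> kclosed c a b T -> kclosed c a b (S :\: T).
Proof.
move=> /kclosedP clS /kclosedP clT; apply/kclosedP=> v e f ev fv ae af.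
by rewrite !inE (clS v e f) ?(clT v e f).
Qed.

Definition kstep : rel (coloring G) := fun c d =>
  [exists a, exists b, exists S, [&& a != b, kclosed c a b S & d == switch c a b S]].

Lemma kstepP c d :
  reflect (exists a b S, [/\ a != b, kclosed c a b S & d = switch c a b S]) (kstep c d).
Proof.
apply: (iffP existsP) =>
  [[a /existsP[b /existsP[S /and3P[ab cl /eqP->]]]] | [a [b [S [ab cl ->]]]]].
  by exists a, b, S.
by exists a; apply/existsP; exists b; apply/existsP; exists S; rewrite ab cl eqxx.
Qed.

Lemma in_ab_switch c a b S f : in_ab a b (switch c a b S f) = in_ab a b (c f).
Proof. by rewrite ffunE; case: ifP; rewrite ?in_ab_swap. Qed.

Lemma kclosed_switch c a b S T : kclosed c a b T -> kclosed (switch c a b S) a b T.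
Proof.
by move/kclosedP=> cl; apply/kclosedP=> v e f ev fv; rewrite !in_ab_switch; apply: cl ev fv.
Qed.

Lemma switchK c a b S : switch (switch c a b S) a b S = c.
Proof. by apply/ffunP=> f; rewrite !ffunE; case: (f \in S); rewrite ?swapK. Qed.

Lemma switchxx c a S : switch c a a S = c.
Proof. by apply/ffunP=> f; rewrite ffunE swapxx; case: ifP. Qed.

Lemma switch_out c a b S : {in S, forall f, ~~ in_ab a b (c f)} -> switch c a b S = c.
Proof. by move=> out; apply/ffunP=> f; rewrite ffunE; case: ifP => // /out/swap_out. Qed.

Lemma switchC c a b S : switch c a b (~: S) = recolor (tperm a b) (switch c a b S).
Proof. by apply/ffunP=> f; rewrite !ffunE inE -swap_tperm; case: (f \in S); rewrite ?swapK. Qed.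

Lemma recolor1 c : recolor (1%g : {perm 'I_3}) c = c.
Proof. by apply/ffunP=> f; rewrite ffunE perm1. Qed.

Lemma recolorM (pi rho : {perm 'I_3}) c : recolor rho (recolor pi c) = recolor (pi * rho)%g c.
Proof. by apply/ffunP=> f; rewrite !ffunE permM. Qed.

Lemma kstep_sym : symmetric kstep.
Proof.
suff step : forall c d, kstep c d -> kstep d c by move=> c d; apply/idP/idP; apply: step.
move=> c d /kstepP[a [b [S [ab cl ->]]]]; apply/kstepP; exists a, b, S.
by rewrite switchK kclosed_switch.
Qed.

Definition kchain c a b e : {set edge G} := [set f | connect (chain_rel c a b) e f].

Lemma chain_rel_sym c a b : symmetric (chain_rel c a b).
Proof.
move=> e f; rewrite /chain_rel andbA [(_ \in _) && _]andbC -andbA; congr [&& _, _ & _].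
by apply: eq_existsb => v; rewrite andbC.
Qed.

Lemma kchain_closed c a b e : kclosed c a b (kchain c a b e).
Proof.
apply/kclosedP=> v x y xv yv ax ay; rewrite !inE.
have xy : chain_rel c a b x y by apply/and3P; split=> //; apply/existsP; exists v; rewrite xv yv.
apply/idP/idP=> ex; first exact: connect_trans ex (connect1 xy).
by apply: connect_trans ex (connect1 _); rewrite chain_rel_sym.
Qed.

Lemma kempe_step_kstep : subrel (@kempe_step G) kstep.
Proof.
move=> c d /existsP[a /existsP[b /existsP[e /and3P[ab _ /eqP->]]]].
apply/kstepP; exists a, b, (kchain c a b e); split=> //; first exact: kchain_closed.
by apply/ffunP=> f; rewrite !ffunE inE.
Qed.

(* switch the chains inside S one at a time *)
Lemma kempe_switch c a b S : kclosed c a b S -> kempe_equiv c (switch c a b S).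
Proof.
have [-> _|ab] := eqVneq a b; first by rewrite switchxx; apply: connect0.
have [n] := ubnP #|[set f in S | in_ab a b (c f)]|.
elim: n c S => // n IH c S /ltnSE le_n cl.
case: (pickP [pred f in S | in_ab a b (c f)]) => [e /andP[eS ae] | none]; last first.
  rewrite switch_out; first exact: connect0.
  by move=> f fS; apply/negP=> af; have /= := none f; rewrite fS af.
have S_chain : closed (chain_rel c a b) S.
  by move=> x y /and3P[ax ay /existsP[v /andP[xv yv]]]; apply: (kclosedP _ _ _ _ cl) xv yv ax ay.
set K := kchain c a b e.
have KS : {subset K <= S} by move=> f; rewrite inE => /(closed_connect S_chain) <-.
set c1 := switch c a b K.
have step : kempe_step c c1.
  apply/existsP; exists a; apply/existsP; exists b; apply/existsP; exists e.
  by apply/and3P; split=> //; apply/eqP/ffunP=> f; rewrite !ffunE inE.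
have -> : switch c a b S = switch c1 a b (S :\: K).
  apply/ffunP=> f; rewrite !ffunE in_setD.
  by case: (boolP (f \in K)) => [/KS->|] //=; rewrite swapK.
apply: connect_trans (connect1 step) (IH _ _ _ _).
  apply: leq_trans le_n; apply: proper_card; apply/properP; split.
    by apply/subsetP=> f; rewrite !inE in_ab_switch => /andP[/andP[_ ->] ->].
  by exists e; rewrite !inE ?eS ?ae ?connect0.
by apply: kclosedD; apply: kclosed_switch => //; apply: kchain_closed.
Qed.

Lemma kempe_equivE c d : kempe_equiv c d = connect kstep c d.
Proof.
apply/idP/idP; apply: connect_sub => x y; first by move/kempe_step_kstep/connect1.
by case/kstepP=> a [b [S [_ cl ->]]]; apply: kempe_switch.
Qed.

Lemma kempe_refl : reflexive (@kempe_equiv G).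
Proof. exact: connect0. Qed.

Lemma kempe_trans : transitive (@kempe_equiv G).
Proof. exact: connect_trans. Qed.

Lemma kempe_sym : symmetric (@kempe_equiv G).
Proof. by move=> c d; rewrite !kempe_equivE (sym_connect_sym kstep_sym). Qed.

Lemma kempe_ind (P : coloring G -> Prop) c :
  P c -> (forall d d', kempe_equiv c d -> P d -> kstep d d' -> P d') ->
  forall d, kempe_equiv c d -> P d.
Proof.
move=> Pc step d; rewrite kempe_equivE => /connectP[p].
elim/last_ind: p d => [|p x IHp] d /=; first by move=> _ ->.
rewrite rcons_path last_rcons => /andP[pp st] ->.
apply: step st; last exact: IHp.
by rewrite kempe_equivE; apply/connectP; exists p.
Qed.

Lemma kempe_recolor c (pi : {perm 'I_3}) : kempe_equiv c (recolor pi c).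
Proof.
have [ts -> _] := prod_tpermP pi; elim: ts c => [|t ts IH] c.
  by rewrite big_nil recolor1 kempe_refl.
rewrite big_cons -recolorM; apply: kempe_trans (IH _).
have -> : recolor (tperm t.1 t.2) c = switch c t.1 t.2 setT.
  by apply/ffunP=> f; rewrite !ffunE inE swap_tperm.
exact/kempe_switch/kclosedT.
Qed.

End KempeSwitch.

(** * Proper colourings *)

Section ProperColorings.
Variable G : mgraph.
Implicit Types (c d : coloring G) (a b : 'I_3) (S : {set edge G}) (e f x y : edge G) (v : vert G).

Lemma properP c : reflect (forall e f, adjacent e f -> c e != c f) (proper c).
Proof.
apply: (iffP forallP) => [pc e f ef | pc e]; first by move/forallP/(_ f)/implyP: (pc e); apply.
by apply/forallP=> f; apply/implyP/pc.
Qed.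

Lemma adjacentP e f : reflect (e != f /\ exists v, inc e v /\ inc f v) (adjacent e f).
Proof.
apply: (iffP andP) => [[ef /existsP[v /andP[ev fv]]] | [ef [v [ev fv]]]]; split=> //.
  by exists v.
by apply/existsP; exists v; rewrite ev fv.
Qed.

Lemma proper_inj_at c v e f : proper c -> inc e v -> inc f v -> c e = c f -> e = f.
Proof.
move/properP=> pc ev fv cef; apply/eqP; apply: contraT => ef.
by have := pc e f; rewrite cef eqxx; apply; apply/adjacentP; split=> //; exists v.
Qed.

Lemma proper_switch c a b S : proper c -> kclosed c a b S -> proper (switch c a b S).
Proof.
move=> /properP pc /kclosedP cl; apply/properP=> e f ef; rewrite !ffunE.
have [_ [v [ev fv]]] := adjacentP _ _ ef; have cef := pc e f ef.
have [eS|eS] := boolP (e \in S); have [fS|fS] := boolP (f \in S) => //.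
- by rewrite (inj_eq (@swap_inj a b)).
- have [ae|ae] := boolP (in_ab a b (c e)); last by rewrite swap_out.
  have [af|af] := boolP (in_ab a b (c f)); first by rewrite (cl v e f) in eS; rewrite ?eS in fS.
  by apply: contraNneq af => <-; rewrite in_ab_swap.
- have [af|af] := boolP (in_ab a b (c f)); last by rewrite swap_out.
  have [ae|ae] := boolP (in_ab a b (c e)); first by rewrite -(cl v e f) in fS; rewrite ?fS in eS.
  by apply: contraNneq ae => ->; rewrite in_ab_swap.
Qed.

Lemma kempe_proper c d : proper c -> kempe_equiv c d -> proper d.
Proof.
move=> pc; elim/kempe_ind => // {}d d' _ pd /kstepP[a [b [S [_ cl ->]]]].
exact: proper_switch.
Qed.

Lemma proper_recolor (pi : {perm 'I_3}) c : proper c -> proper (recolor pi c).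
Proof. by move/properP=> pc; apply/properP=> e f ef; rewrite !ffunE (inj_eq perm_inj) pc. Qed.

Section DegreeThree.
Variables (c : coloring G) (v : vert G).
Hypotheses (pc : proper c) (dv : deg v = 3).

Lemma proper_color_at a : exists2 e, inc e v & c e = a.
Proof.
have inj : {in [set e | inc e v] &, injective c}.
  by move=> e f; rewrite !inE; apply: proper_inj_at.
have /setP/(_ a) : c @: [set e | inc e v] = setT.
  by apply/eqP; rewrite eqEcard subsetT card_in_imset // cardsT card_ord -[#|_|]/(deg v) dv.
by rewrite inE => /imsetP[e]; rewrite inE; exists e.
Qed.

Lemma card_color_at a : #|[set e | inc e v & c e == a]| = 1.
Proof.
have [e ev cea] := proper_color_at a; apply/eqP/cards1P; exists e; apply/setP=> f.
rewrite !inE; apply/andP/eqP => [[fv /eqP cfa] | ->]; last by rewrite ev cea.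
by apply: proper_inj_at pc fv ev _; rewrite cfa cea.
Qed.

(* the two edges at v coloured a and b are both in S or both outside it *)
Lemma even_kclosed_at a b S : a != b -> kclosed c a b S ->
  ~~ odd #|[set e | inc e v & in_ab a b (c e) && (e \in S)]|.
Proof.
move=> ab /kclosedP cl.
have [ea eav cea] := proper_color_at a; have [eb ebv ceb] := proper_color_at b.
have aea : in_ab a b (c ea) by rewrite cea /in_ab !inE eqxx.
have aeb : in_ab a b (c eb) by rewrite ceb /in_ab !inE eqxx orbT.
have eab : ea != eb by apply: contraNneq ab => eab; rewrite -cea -ceb eab.
have eaS := cl v ea eb eav ebv aea aeb.
have -> : [set e | inc e v & in_ab a b (c e) && (e \in S)] =
          if ea \in S then [set ea; eb] else set0.
  apply/setP=> e; rewrite !inE.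
  apply/andP/idP=> [[ev /andP[ae eS]] | ].
    move: ae; rewrite /in_ab !inE => /orP[] /eqP ce.
      by rewrite -(proper_inj_at pc ev eav) ?cea // eS !inE eqxx.
    by rewrite eaS -(proper_inj_at pc ev ebv) ?ceb // eS !inE eqxx orbT.
  case: ifP => [eaS' | _]; last by rewrite inE.
  by rewrite !inE => /orP[] /eqP->; rewrite ?eav ?aea ?eaS' ?ebv ?aeb -?eaS.
by case: ifP; rewrite ?cards0 // cards2 eab.
Qed.

End DegreeThree.
End ProperColorings.

(** * Parity across a cut of a cubic graph *)

Lemma odd_sum (I : Type) (r : seq I) (P : pred I) (F : I -> nat) :
  odd (\sum_(i <- r | P i) F i) = \big[addb/false]_(i <- r | P i) odd (F i).
Proof. exact: (big_morph odd oddD). Qed.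

Lemma sum_eq_pred (T : finType) (P : pred T) (x : T) : \sum_(u | P u) (u == x) = P x.
Proof.
rewrite big_mkcond (eq_bigr (fun u => if u == x then nat_of_bool (P u) else 0)).
  by rewrite -big_mkcond (big_pred1 x).
by move=> u _; case: eqP => [->|_]; rewrite ?eqxx; case: (P _).
Qed.

Lemma card_set_sum (T : finType) (P : pred T) : #|[set x | P x]| = \sum_x P x.
Proof. by rewrite -sum1dep_card big_mkcond; apply: eq_bigr => x _; case: (P x). Qed.

Section Cuts.
Variable G : mgraph.
Hypothesis Gcub : cubic G.
Implicit Types (A : {set vert G}) (c : coloring G) (a b : 'I_3) (S : {set edge G}).

Definition cut A : {set edge G} := [set e | ((endpt e).1 \in A) != ((endpt e).2 \in A)].

Lemma cubic_loopless (e : edge G) : (endpt e).1 != (endpt e).2.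
Proof. by case/andP: Gcub => /forallP. Qed.

Lemma cubic_deg (v : vert G) : deg v = 3.
Proof. by case/andP: Gcub => _ /forallP/(_ v)/eqP. Qed.

(* handshake parity: the P-edges inside A are counted twice on the left *)
Lemma odd_sum_cut A (P : pred (edge G)) :
  odd (\sum_(u in A) #|[set e | inc e u & P e]|) = odd #|[set e in cut A | P e]|.
Proof.
have endsA e : \sum_(u in A) inc e u = ((endpt e).1 \in A) + ((endpt e).2 \in A).
  rewrite -!sum_eq_pred -big_split; apply: eq_bigr => u _ /=; rewrite /inc.
  by case: eqP => [->|]; rewrite ?(negbTE (cubic_loopless e)).
under eq_bigr do rewrite card_set_sum.
rewrite exchange_big card_set_sum !odd_sum; apply: eq_bigr => e _ /=.
case: (P e); last by rewrite andbF big1 // => u _; rewrite andbF.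
under eq_bigr do rewrite andbT.
by rewrite endsA oddD inE andbT; case: (_ \in A); case: (_ \in A).
Qed.

Lemma odd_cut_color A c a : proper c -> odd #|[set e in cut A | c e == a]| = odd #|A|.
Proof.
move=> pc; rewrite -odd_sum_cut (eq_bigr (fun=> 1)) ?sum1_card // => u _.
exact: card_color_at pc (cubic_deg u) a.
Qed.

Lemma even_cut_kclosed A c a b S : proper c -> a != b -> kclosed c a b S ->
  ~~ odd #|[set e in cut A | in_ab a b (c e) && (e \in S)]|.
Proof.
move=> pc ab cl; rewrite -odd_sum_cut odd_sum big1 // => u _.
exact/negbTE/(even_kclosed_at pc (cubic_deg u) ab cl).
Qed.

End Cuts.

Lemma odd_card_fibres (I : finType) (f : I -> 'I_3) p :
  (forall a, odd #|[set i | f i == a]| = p) -> p = odd #|I|.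
Proof.
move=> fib; have -> : #|I| = \sum_(a : 'I_3) #|[set i | f i == a]|.
  under eq_bigr do rewrite card_set_sum.
  rewrite exchange_big -sum1_card; apply: eq_bigr => i _.
  by under eq_bigr do rewrite eq_sym; rewrite sum_eq_pred.
rewrite odd_sum (eq_bigr (fun=> p)) => [|a _]; last exact: fib.
by rewrite big_const_ord /=; clear fib; case: p.
Qed.

Lemma odd_fibres_inj (f : 'I_3 -> 'I_3) p :
  (forall a, odd #|[set i | f i == a]| = p) -> injective f.
Proof.
move=> fib; have p_odd := odd_card_fibres fib; rewrite card_ord /= in p_odd.
have onto a : a \in codom f.
  have /card_gt0P[i] := odd_gt0 (etrans (fib a) p_odd).
  by rewrite inE => /eqP <-; apply: codom_f.
by apply: in2T; apply/image_injP/eqP/eq_card => a; rewrite onto.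
Qed.

Lemma odd_fibres_const (f : bool -> 'I_3) p :
  (forall a, odd #|[set i | f i == a]| = p) -> f false = f true.
Proof.
move=> fib; have p_even := odd_card_fibres fib; rewrite card_bool /= in p_even.
set F := [set i | f i == f false].
have le2 : #|F| <= 2 by rewrite -card_bool; apply: max_card.
have gt0 : 0 < #|F| by apply/card_gt0P; exists false; rewrite inE.
have ev := fib (f false); rewrite p_even -/F in ev.
have : F == setT.
  by rewrite eqEcard subsetT cardsT card_bool; move: le2 gt0 ev; case: #|F| => [|[|[|]]].
by move/eqP/setP/(_ true); rewrite !inE => /eqP.
Qed.

Lemma even_card_pair (I : finType) (P : pred I) i j :
  i != j -> ~~ odd #|[set k in [set i; j] | P k]| -> P i = P j.
Proof.
move=> ij; rewrite card_set_sum.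
have -> : \sum_k ((k \in [set i; j]) && P k) = \sum_(k in [set i; j]) P k.
  by rewrite [RHS]big_mkcond; apply: eq_bigr => k _; case: (k \in _).
by rewrite big_setU1 ?big_set1 ?inE //= oddD; case: (P i); case: (P j).
Qed.

Lemma in_ab_cover (a b x y z : 'I_3) : x != y ->
  in_ab a b x -> in_ab a b y -> in_ab a b z -> (z == x) || (z == y).
Proof.
rewrite /in_ab !inE => xy.
by do 3!case/orP=> /eqP ?; subst; rewrite ?eqxx ?orbT //; rewrite eqxx in xy.
Qed.

Lemma ord3_third (x z u v : 'I_3) : z != x -> u != x -> u != z -> v != x -> v != z -> u = v.
Proof.
move=> zx ux uz vx vz; apply/eqP; move: zx ux uz vx vz.
by move: x z u v; do 4!case=> [[|[|[|?]]] ?].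
Qed.

(* y = z when pi is the identity *)
Lemma perm3_fix (pi : {perm 'I_3}) x :
  pi x = x -> exists y z, [/\ y != x, z != x & pi =1 swap y z].
Proof.
move=> pix; have [y yx] : exists y : 'I_3, y != x.
  by case: (eqVneq x ord0) => [->|x0]; [exists ord_max | exists ord0; rewrite eq_sym].
have zx : pi y != x by rewrite -pix (inj_eq perm_inj).
exists y, (pi y); split=> // w.
have [-> | wx] := eqVneq w x; first by rewrite pix /swap eq_sym (negbTE yx) eq_sym (negbTE zx).
have [-> | wy] := eqVneq w y; first by rewrite /swap eqxx.
have pwx : pi w != x by rewrite -pix (inj_eq perm_inj).
have pwz : pi w != pi y by rewrite (inj_eq perm_inj).
have [zy | zy] := eqVneq (pi y) y.
  by rewrite zy swapxx; apply: ord3_third zx pwx pwz wx _; rewrite zy.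
rewrite /swap (negbTE wy); have [wz | wz] := eqVneq w (pi y).
  by rewrite wz in pwx pwz *; apply: ord3_third zx pwx pwz yx _; rewrite eq_sym.
by case/eqP: wy; apply: ord3_third zx wx wz yx _; rewrite eq_sym.
Qed.

(** * Gluing two graphs along edge embeddings *)

Section Restriction.
Variables (G H : mgraph) (sig : edge H -> edge G).

Definition restrict (c : coloring G) : coloring H := [ffun e => c (sig e)].

Lemma restrict_recolor (pi : 'I_3 -> 'I_3) c : restrict (recolor pi c) = recolor pi (restrict c).
Proof. by apply/ffunP=> e; rewrite !ffunE. Qed.

Lemma restrict_switch c a b S : restrict (switch c a b S) = switch (restrict c) a b (sig @^-1: S).
Proof. by apply/ffunP=> e; rewrite !ffunE inE. Qed.

End Restriction.

(* for c, the edges x and y behave like two adjacent edges *)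
Definition kadj (G : mgraph) (c : coloring G) (x y : edge G) : Prop :=
  c x != c y /\ forall a b S, a != b -> kclosed c a b S ->
    in_ab a b (c x) -> in_ab a b (c y) -> (x \in S) = (y \in S).

Lemma adjacent_kadj (G : mgraph) (c : coloring G) v x y :
  proper c -> x != y -> inc x v -> inc y v -> kadj c x y.
Proof.
move=> pc xy xv yv; split; last by move=> a b S _ /kclosedP cl; apply: cl xv yv.
by apply: contra xy => /eqP/(proper_inj_at pc xv yv)->.
Qed.

Definition kadj_embedding (G H : mgraph) (sig : edge H -> edge G) : Prop :=
  forall c, proper c ->
  forall u (e f : edge H), e != f -> inc e u -> inc f u -> kadj c (sig e) (sig f).

Definition kswitch_liftable (G H H' : mgraph) (sig : edge H -> edge G) (sig' : edge H' -> edge G) :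
    Prop :=
  forall c a b T, proper c -> a != b -> kclosed (restrict sig c) a b T ->
  exists S T', [/\ kclosed c a b S, T' \in [:: T; ~: T],
    restrict sig (switch c a b S) = switch (restrict sig c) a b T' &
    restrict sig' (switch c a b S) = restrict sig' c].

Section Embedding.
Variables (G H H' : mgraph) (sig : edge H -> edge G) (sig' : edge H' -> edge G).
Hypothesis sig_kadj : kadj_embedding sig.

Lemma restrict_proper c : proper c -> proper (restrict sig c).
Proof.
move=> pc; apply/properP=> e f /adjacentP[ef [u [eu fu]]]; rewrite !ffunE.
by case: (sig_kadj pc ef eu fu).
Qed.

Lemma restrict_kclosed c a b S : proper c -> a != b -> kclosed c a b S ->
  kclosed (restrict sig c) a b (sig @^-1: S).
Proof.
move=> pc ab cl; apply/kclosedP=> u e f eu fu; rewrite !ffunE !inE => ae af.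
have [-> // | ef] := eqVneq e f.
by case: (sig_kadj pc ef eu fu) => _ /(_ a b S ab cl ae af).
Qed.

Lemma restrict_kempe c d : proper c -> kempe_equiv c d ->
  kempe_equiv (restrict sig c) (restrict sig d).
Proof.
move=> pc; elim/kempe_ind => [|{}d d' cd rcd /kstepP[a [b [S [ab cl ->]]]]].
  exact: kempe_refl.
apply: kempe_trans rcd _; rewrite restrict_switch; apply: kempe_switch.
exact: restrict_kclosed (kempe_proper pc cd) ab cl.
Qed.

Hypothesis sig_lift : kswitch_liftable sig sig'.

Lemma lift_kstep c d : proper c -> kstep (restrict sig c) d ->
  exists c', [/\ kempe_equiv c c', restrict sig c' = d &
    exists pi : {perm 'I_3}, restrict sig' c' = recolor pi (restrict sig' c)].
Proof.
move=> pc /kstepP[a [b [T [ab clT ->]]]].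
have [S [T' [clS TT' rS rS']]] := sig_lift pc ab clT.
have cS := kempe_switch clS.
move: TT'; rewrite !inE => /orP[] /eqP eT; subst T'.
  by exists (switch c a b S); split=> //; exists 1%g; rewrite rS' recolor1.
exists (recolor (tperm a b) (switch c a b S)); split.
- exact: kempe_trans cS (kempe_recolor _ _).
- by rewrite restrict_recolor rS switchC recolorM tperm2 recolor1.
- by exists (tperm a b); rewrite restrict_recolor rS'.
Qed.

Lemma lift_kempe c d : proper c -> kempe_equiv (restrict sig c) d ->
  exists c', [/\ kempe_equiv c c', restrict sig c' = d &
    exists pi : {perm 'I_3}, restrict sig' c' = recolor pi (restrict sig' c)].
Proof.
move=> pc; elim/kempe_ind => [|d1 d2 _ [c1 [cc1 <- [pi1 e1]]] st].
  by exists c; split; rewrite ?kempe_refl //; exists 1%g; rewrite recolor1.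
have [c2 [c12 <- [pi2 e2]]] := lift_kstep (kempe_proper pc cc1) st.
exists c2; split=> //; first exact: kempe_trans cc1 c12.
by exists (pi1 * pi2)%g; rewrite e2 e1 recolorM.
Qed.

End Embedding.

Lemma card_imset_kernel (T U V : finType) (D : {set T}) (g : T -> U) (h : T -> V) :
  {in D &, forall x y, (g x == g y) = (h x == h y)} -> #|g @: D| = #|h @: D|.
Proof.
move=> gh; pose gh2 x := (g x, h x).
have -> : g @: D = fst @: (gh2 @: D) by rewrite -imset_comp.
have -> : h @: D = snd @: (gh2 @: D) by rewrite -imset_comp.
rewrite (card_in_imset (f := fst)) ?(card_in_imset (f := snd)) //
  => _ _ /imsetP[x xD ->] /imsetP[y yD ->] /= /eqP exy; congr pair; apply/eqP;
  by [| rewrite -gh | rewrite gh].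
Qed.

Definition kclass (G : mgraph) (c : coloring G) : {set coloring G} := [set d | kempe_equiv c d].

Lemma kclass_eq (G : mgraph) (c d : coloring G) : (kclass c == kclass d) = kempe_equiv c d.
Proof.
apply/idP/idP => [/eqP/setP/(_ d) | cd]; first by rewrite !inE kempe_refl => ->.
apply/eqP/setP=> x; rewrite !inE; apply/idP/idP; last exact: kempe_trans.
by apply: kempe_trans; rewrite kempe_sym.
Qed.

Section Gluing.
Variables (G G1 G2 : mgraph) (sig1 : edge G1 -> edge G) (sig2 : edge G2 -> edge G).
Local Notation r1 := (restrict sig1).
Local Notation r2 := (restrict sig2).
Hypotheses (kadj1 : kadj_embedding sig1) (kadj2 : kadj_embedding sig2).
Hypotheses (lift1 : kswitch_liftable sig1 sig2) (lift2 : kswitch_liftable sig2 sig1).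
Hypothesis recolor_kempe : forall c c' (pi : {perm 'I_3}), proper c -> proper c' ->
  r2 c' = r2 c -> r1 c' = recolor pi (r1 c) -> kempe_equiv c c'.
Hypothesis extend : forall p1 p2, proper p1 -> proper p2 ->
  exists c, [/\ proper c, kempe_equiv (r1 c) p1 & kempe_equiv (r2 c) p2].

Lemma kempe_glue c c' : proper c -> proper c' ->
  kempe_equiv c c' = kempe_equiv (r1 c) (r1 c') && kempe_equiv (r2 c) (r2 c').
Proof.
move=> pc pc'; apply/idP/andP => [cc' | [k1 k2]].
  by rewrite (restrict_kempe kadj1 pc cc') (restrict_kempe kadj2 pc cc').
have [c1 [cc1 e1 [pi1 e2]]] := lift_kempe lift1 pc k1.
have pc1 := kempe_proper pc cc1.
have k2' : kempe_equiv (r2 c1) (r2 c').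
  by rewrite e2; apply: kempe_trans k2; rewrite kempe_sym kempe_recolor.
have [c2 [c12 e3 [pi2 e4]]] := lift_kempe lift2 pc1 k2'.
apply: kempe_trans cc1 (kempe_trans c12 _); rewrite kempe_sym.
by apply: recolor_kempe pc' (kempe_proper pc1 c12) e3 _; rewrite e4 e1.
Qed.


Theorem Kprime_glue : Kprime G = Kprime G1 * Kprime G2.
Proof.
pose pair c := (kclass (r1 c), kclass (r2 c)).
have -> : Kprime G = #|pair @: [set c | proper c]|.
  apply: card_imset_kernel => c c'; rewrite !inE => pc pc'.
  by rewrite xpair_eqE !kclass_eq kempe_glue.
rewrite /Kprime -cardsX; apply: eq_card => -[C1 C2]; rewrite [in RHS]inE /=.
apply/imsetP/andP => [[c] | [/imsetP[p1 + ->] /imsetP[p2 + ->]]]; rewrite !inE.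
  move=> pc [-> ->]; split; apply/imsetP.
    by exists (r1 c); rewrite ?inE ?(restrict_proper kadj1).
  by exists (r2 c); rewrite ?inE ?(restrict_proper kadj2).
move=> pp1 pp2; have [c [pc k1 k2]] := extend pp1 pp2.
by exists c; rewrite ?inE //; congr (_, _); apply/eqP; rewrite kclass_eq kempe_sym.
Qed.

End Gluing.

(** * The Y-composition *)

Lemma other_inc (G : mgraph) (e : edge G) v u : inc e v -> u != v -> inc e u = (u == other e v).
Proof.
rewrite /other => ev uv; case: ((endpt e).1 =P v) => [e1v | e1v].
  by rewrite /inc e1v (negbTE uv).
have e2v : (endpt e).2 = v by case/orP: ev => /eqP ev //; case: e1v.
by rewrite /inc e2v (negbTE uv) orbF.
Qed.

Lemma disjoint_or_compl (T : finType) (B S : {set T}) :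
  {in B &, forall x y, (x \in S) = (y \in S)} ->
  exists2 S', S' \in [:: S; ~: S] & [disjoint B & S'].
Proof.
move=> BS; have [dis | /pred0Pn[x /andP[xB xS]]] := boolP [disjoint B & S].
  by exists S; rewrite ?inE ?eqxx.
exists (~: S); first by rewrite !inE eqxx orbT.
by rewrite disjoints_subset setCK; apply/subsetP=> y yB; rewrite -(BS x y).
Qed.

Section YData.
Variables (G : mgraph) (d : ydata G).
Hypothesis Gcub : cubic G.

Definition yinv (e : edge G) : 'I_3 := odflt ord0 [pick j | yf d j == e].

Lemma yf_yinv e : inc e (yv d) -> yf d (yinv e) = e.
Proof.
move=> ev; rewrite /yinv; case: pickP => [j /eqP // | none].
have : e \in [set yf d j | j in 'I_3].
  suff -> : [set yf d j | j in 'I_3] = [set f | inc f (yv d)] by rewrite inE.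
  apply/eqP; rewrite eqEcard card_imset ?card_ord; last exact: yf_inj.
  rewrite -[#|_|]/(deg _) (cubic_deg Gcub) leqnn andbT.
  by apply/subsetP=> _ /imsetP[j _ ->]; rewrite inE yf_inc.
by case/imsetP=> j _ ej; have := none j; rewrite ej eqxx.
Qed.

Lemma yinv_yf j : yinv (yf d j) = j.
Proof. by apply: (@yf_inj _ d); rewrite yf_yinv ?yf_inc. Qed.

End YData.

Section YComposition.
Variables (G1 G2 : mgraph) (d1 : ydata G1) (d2 : ydata G2).
Hypotheses (cub1 : cubic G1) (cub2 : cubic G2).
Local Notation G := (Ycomp d1 d2).
Local Notation v1 := (yv d1).
Local Notation v2 := (yv d2).
Implicit Types (c : coloring G) (x y : edge G).

Definition yemb1 (e : edge G1) : edge G :=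
  if (insub e : option {e | ~~ inc e v1}) is Some s then inl (inl s) else inr (yinv d1 e).

Definition yemb2 (e : edge G2) : edge G :=
  if (insub e : option {e | ~~ inc e v2}) is Some s then inl (inr s) else inr (yinv d2 e).

Lemma yemb1_out e (h : ~~ inc e v1) : yemb1 e = inl (inl (exist _ e h)).
Proof. by rewrite /yemb1 (insubT (fun e => ~~ inc e v1) h). Qed.

Lemma yemb2_out e (h : ~~ inc e v2) : yemb2 e = inl (inr (exist _ e h)).
Proof. by rewrite /yemb2 (insubT (fun e => ~~ inc e v2) h). Qed.

Lemma yemb1_yf j : yemb1 (yf d1 j) = inr j.
Proof. by rewrite /yemb1 insubN ?negbK ?yf_inc // yinv_yf. Qed.

Lemma yemb2_yf j : yemb2 (yf d2 j) = inr j.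
Proof. by rewrite /yemb2 insubN ?negbK ?yf_inc // yinv_yf. Qed.

Lemma yemb1_inj : injective yemb1.
Proof.
move=> e f; have [ev|ev] := boolP (inc e v1); have [fv|fv] := boolP (inc f v1).
- by rewrite -(yf_yinv cub1 ev) -(yf_yinv cub1 fv) !yemb1_yf => -[->].
- by rewrite -(yf_yinv cub1 ev) yemb1_yf (yemb1_out fv).
- by rewrite -(yf_yinv cub1 fv) yemb1_yf (yemb1_out ev).
- by rewrite (yemb1_out ev) (yemb1_out fv) => -[].
Qed.

Lemma yemb2_inj : injective yemb2.
Proof.
move=> e f; have [ev|ev] := boolP (inc e v2); have [fv|fv] := boolP (inc f v2).
- by rewrite -(yf_yinv cub2 ev) -(yf_yinv cub2 fv) !yemb2_yf => -[->].
- by rewrite -(yf_yinv cub2 ev) yemb2_yf (yemb2_out fv).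
- by rewrite -(yf_yinv cub2 fv) yemb2_yf (yemb2_out ev).
- by rewrite (yemb2_out ev) (yemb2_out fv) => -[].
Qed.

Lemma inc_yemb1 e (t : {u | u != v1}) : inc (yemb1 e) (inl t : vert G) = inc e (val t).
Proof.
have [ev|ev] := boolP (inc e v1); last by rewrite yemb1_out.
rewrite -(yf_yinv cub1 ev); move: (yinv d1 e) => j.
by rewrite yemb1_yf (other_inc (yf_inc d1 j) (valP t)) /inc /= orbF.
Qed.

Lemma inc_yemb2 e (t : {u | u != v2}) : inc (yemb2 e) (inr t : vert G) = inc e (val t).
Proof.
have [ev|ev] := boolP (inc e v2); last by rewrite yemb2_out.
rewrite -(yf_yinv cub2 ev); move: (yinv d2 e) => j.
by rewrite yemb2_yf (other_inc (yf_inc d2 j) (valP t)) /inc /=.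
Qed.

Lemma yemb1_onto x (t : {u | u != v1}) : inc x (inl t : vert G) -> exists e, x = yemb1 e.
Proof.
case: x => [[[e h] | [e h]] | j] xt.
- by exists e; rewrite (yemb1_out h).
- by move: xt; rewrite /inc.
- by exists (yf d1 j); rewrite yemb1_yf.
Qed.

Lemma yemb2_onto x (t : {u | u != v2}) : inc x (inr t : vert G) -> exists e, x = yemb2 e.
Proof.
case: x => [[[e h] | [e h]] | j] xt.
- by move: xt; rewrite /inc.
- by exists e; rewrite (yemb2_out h).
- by exists (yf d2 j); rewrite yemb2_yf.
Qed.

Lemma yemb_cover x : (exists e, x = yemb1 e) \/ (exists e, x = yemb2 e).
Proof.
case: x => [[[e h] | [e h]] | j].
- by left; exists e; rewrite (yemb1_out h).
- by right; exists e; rewrite (yemb2_out h).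
- by left; exists (yf d1 j); rewrite yemb1_yf.
Qed.

Lemma Ycomp_cubic : cubic G.
Proof.
apply/andP; split.
  by apply/forallP=> -[[[e h] | [e h]] | j] //=; apply: cubic_loopless.
apply/forallP=> -[t | t]; rewrite /deg.
  suff -> : [set x | inc x (inl t : vert G)] = yemb1 @: [set e | inc e (val t)].
    by rewrite card_imset; [rewrite -[#|_|]/(deg _) (cubic_deg cub1) | exact: yemb1_inj].
  apply/setP=> x; rewrite inE; apply/idP/imsetP => [xt | [e + ->]].
    by have [e ex] := yemb1_onto xt; exists e; rewrite // inE -inc_yemb1 -ex.
  by rewrite inE inc_yemb1.
suff -> : [set x | inc x (inr t : vert G)] = yemb2 @: [set e | inc e (val t)].
  by rewrite card_imset; [rewrite -[#|_|]/(deg _) (cubic_deg cub2) | exact: yemb2_inj].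
apply/setP=> x; rewrite inE; apply/idP/imsetP => [xt | [e + ->]].
  by have [e ex] := yemb2_onto xt; exists e; rewrite // inE -inc_yemb2 -ex.
by rewrite inE inc_yemb2.
Qed.

Definition Yleft : {set vert G} := [set w | if w is inl _ then true else false].

Lemma card_Ycut (P : pred (edge G)) : #|[set x in cut Yleft | P x]| = #|[set j | P (inr j)]|.
Proof.
have inr_inj : injective (fun j => inr j : edge G) by move=> j k [].
rewrite -(card_imset _ inr_inj); apply: eq_card => x; rewrite !inE.
apply/andP/imsetP => [|[j + ->]]; last by rewrite !inE.
by case: x => [[[e h] | [e h]] | j]; rewrite ?inE //= => -[] // _ Pj; exists j; rewrite ?inE.
Qed.

Lemma Ycut_inj c : proper c -> injective (fun j => c (inr j)).
Proof.
move=> pc; apply: (@odd_fibres_inj _ (odd #|Yleft|)) => a.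
by rewrite -(odd_cut_color Ycomp_cubic Yleft a pc) card_Ycut.
Qed.

Lemma Ycut_kadj c j k : proper c -> j != k -> kadj c (inr j) (inr k).
Proof.
move=> pc jk; have cinj := Ycut_inj pc; split=> [|a b S ab cl aj ak].
  by rewrite (inj_eq cinj).
apply: (even_card_pair (P := fun i => inr i \in S) jk).
have := even_cut_kclosed Ycomp_cubic Yleft pc ab cl; rewrite card_Ycut.
congr (~~ odd _); apply: eq_card => i; rewrite !inE; apply: andb_id2r => _.
apply/idP/idP => [ai | /orP[] /eqP-> //].
by have := in_ab_cover _ aj ak ai; rewrite !(inj_eq cinj); apply.
Qed.

Lemma yemb1_kadj : kadj_embedding yemb1.
Proof.
move=> c pc u e f ef eu fu; have [uv | uv] := eqVneq u v1.
  subst u; rewrite -(yf_yinv cub1 eu) -(yf_yinv cub1 fu) !yemb1_yf.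
  apply: Ycut_kadj pc _; apply: contraNneq ef => efv.
  by rewrite -(yf_yinv cub1 eu) efv yf_yinv.
apply: (adjacent_kadj (v := inl (exist _ u uv) : vert G)); rewrite ?inc_yemb1 //.
by rewrite (inj_eq yemb1_inj).
Qed.

Lemma yemb2_kadj : kadj_embedding yemb2.
Proof.
move=> c pc u e f ef eu fu; have [uv | uv] := eqVneq u v2.
  subst u; rewrite -(yf_yinv cub2 eu) -(yf_yinv cub2 fu) !yemb2_yf.
  apply: Ycut_kadj pc _; apply: contraNneq ef => efv.
  by rewrite -(yf_yinv cub2 eu) efv yf_yinv.
apply: (adjacent_kadj (v := inr (exist _ u uv) : vert G)); rewrite ?inc_yemb2 //.
by rewrite (inj_eq yemb2_inj).
Qed.

Lemma yemb2_not_edge1 e s : (yemb2 e == inl (inl s)) = false.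
Proof. by rewrite /yemb2; case: insub. Qed.

Lemma yemb1_not_edge2 e s : (yemb1 e == inl (inr s)) = false.
Proof. by rewrite /yemb1; case: insub. Qed.

Lemma yemb1_liftable : kswitch_liftable yemb1 yemb2.
Proof.
move=> c a b T pc ab clT.
have [T' TT' dis] : exists2 T', T' \in [:: T; ~: T] &
    [disjoint [set e | inc e v1 & in_ab a b (c (yemb1 e))] & T'].
  apply: disjoint_or_compl => e f; rewrite !inE => /andP[ev ae] /andP[fv af].
  by move/kclosedP: clT => /(_ v1 e f ev fv); rewrite !ffunE; apply.
have clT' : kclosed (restrict yemb1 c) a b T'.
  by move: TT'; rewrite !inE => /orP[] /eqP->; last apply: kclosedC.
pose S := yemb1 @: [set e in T' | ~~ inc e v1].
have S_inner x : x \in S -> exists s, x = inl (inl s).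
  by case/imsetP=> e; rewrite inE => /andP[_ ev] ->; exists (exist _ e ev); rewrite yemb1_out.
have memS e : in_ab a b (c (yemb1 e)) -> (yemb1 e \in S) = (e \in T').
  move=> ae; rewrite mem_imset ?inE; last exact: yemb1_inj.
  have [ev|_] := boolP (inc e v1); rewrite ?andbT //= andbF.
  by apply/esym/(disjointFr dis); rewrite inE ev.
exists S, T'; split=> //.
- apply/kclosedP=> -[t|t] x y xt yt ax ay.
    have [e ex] := yemb1_onto xt; have [f fy] := yemb1_onto yt; subst x y.
    rewrite !memS //; rewrite inc_yemb1 in xt; rewrite inc_yemb1 in yt.
    by move/kclosedP: clT' => /(_ _ e f xt yt); rewrite !ffunE; apply.
  have notS z : inc z (inr t : vert G) -> z \notin S.
    by move=> zt; apply/negP=> /S_inner[[e h] zs]; rewrite zs in zt.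
  by rewrite (negbTE (notS x xt)) (negbTE (notS y yt)).
- apply/ffunP=> e; rewrite !ffunE.
  have [ae|ae] := boolP (in_ab a b (c (yemb1 e))); first by rewrite memS.
  by case: ifP; case: ifP; rewrite ?swap_out.
- apply/ffunP=> f; rewrite !ffunE.
  by case: ifP => // /S_inner[s /eqP]; rewrite yemb2_not_edge1.
Qed.

Lemma yemb2_liftable : kswitch_liftable yemb2 yemb1.
Proof.
move=> c a b T pc ab clT.
have [T' TT' dis] : exists2 T', T' \in [:: T; ~: T] &
    [disjoint [set e | inc e v2 & in_ab a b (c (yemb2 e))] & T'].
  apply: disjoint_or_compl => e f; rewrite !inE => /andP[ev ae] /andP[fv af].
  by move/kclosedP: clT => /(_ v2 e f ev fv); rewrite !ffunE; apply.
have clT' : kclosed (restrict yemb2 c) a b T'.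
  by move: TT'; rewrite !inE => /orP[] /eqP->; last apply: kclosedC.
pose S := yemb2 @: [set e in T' | ~~ inc e v2].
have S_inner x : x \in S -> exists s, x = inl (inr s).
  by case/imsetP=> e; rewrite inE => /andP[_ ev] ->; exists (exist _ e ev); rewrite yemb2_out.
have memS e : in_ab a b (c (yemb2 e)) -> (yemb2 e \in S) = (e \in T').
  move=> ae; rewrite mem_imset ?inE; last exact: yemb2_inj.
  have [ev|_] := boolP (inc e v2); rewrite ?andbT //= andbF.
  by apply/esym/(disjointFr dis); rewrite inE ev.
exists S, T'; split=> //.
- apply/kclosedP=> -[t|t] x y xt yt ax ay; last first.
    have [e ex] := yemb2_onto xt; have [f fy] := yemb2_onto yt; subst x y.
    rewrite !memS //; rewrite inc_yemb2 in xt; rewrite inc_yemb2 in yt.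
    by move/kclosedP: clT' => /(_ _ e f xt yt); rewrite !ffunE; apply.
  have notS z : inc z (inl t : vert G) -> z \notin S.
    by move=> zt; apply/negP=> /S_inner[[e h] zs]; rewrite zs in zt.
  by rewrite (negbTE (notS x xt)) (negbTE (notS y yt)).
- apply/ffunP=> e; rewrite !ffunE.
  have [ae|ae] := boolP (in_ab a b (c (yemb2 e))); first by rewrite memS.
  by case: ifP; case: ifP; rewrite ?swap_out.
- apply/ffunP=> f; rewrite !ffunE.
  by case: ifP => // /S_inner[s /eqP]; rewrite yemb1_not_edge2.
Qed.

(* the cut edges carry all three colours, so pi must be the identity *)
Lemma Yrecolor_kempe c c' (pi : {perm 'I_3}) : proper c -> proper c' ->
  restrict yemb2 c' = restrict yemb2 c ->
  restrict yemb1 c' = recolor pi (restrict yemb1 c) -> kempe_equiv c c'.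
Proof.
move=> pc _ /ffunP r2 /ffunP r1.
have cut j : c' (inr j) = c (inr j) by have := r2 (yf d2 j); rewrite !ffunE yemb2_yf.
have pi1 a : pi a = a.
  have /codomP[j ->] := injF_onto (Ycut_inj pc) a.
  by have := r1 (yf d1 j); rewrite !ffunE yemb1_yf cut.
suff -> : c' = c by apply: kempe_refl.
apply/ffunP=> x; case: (yemb_cover x) => -[e ->].
  by have := r1 e; rewrite !ffunE pi1.
by have := r2 e; rewrite !ffunE.
Qed.

Lemma Ycomp_proper c : proper (restrict yemb1 c) -> proper (restrict yemb2 c) -> proper c.
Proof.
move=> /properP p1 /properP p2; apply/properP=> x y /adjacentP[xy [[t|t] [xt yt]]].
  have [e ex] := yemb1_onto xt; have [f fy] := yemb1_onto yt; subst x y.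
  rewrite inc_yemb1 in xt; rewrite inc_yemb1 in yt.
  have := p1 e f; rewrite !ffunE; apply; apply/adjacentP; split; last by exists (val t).
  by apply: contraNneq xy => ->.
have [e ex] := yemb2_onto xt; have [f fy] := yemb2_onto yt; subst x y.
rewrite inc_yemb2 in xt; rewrite inc_yemb2 in yt.
have := p2 e f; rewrite !ffunE; apply; apply/adjacentP; split; last by exists (val t).
by apply: contraNneq xy => ->.
Qed.

(* recolour p2 so that the two colourings agree on the edges at v1 and v2 *)
Lemma Yextend p1 p2 : proper p1 -> proper p2 ->
  exists c, [/\ proper c, kempe_equiv (restrict yemb1 c) p1 & kempe_equiv (restrict yemb2 c) p2].
Proof.
move=> pp1 pp2.
have inj (H : mgraph) (p : coloring H) (d : ydata H) :
    proper p -> injective (fun j => p (yf d j)).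
  by move=> pp j k /(proper_inj_at pp (yf_inc d j) (yf_inc d k)); apply: yf_inj.
pose pi := ((perm (inj _ _ d2 pp2))^-1 * perm (inj _ _ d1 pp1))%g.
have pi_cut j : pi (p2 (yf d2 j)) = p1 (yf d1 j).
  by rewrite permM -[p2 _](permE (inj _ _ d2 pp2)) permK permE.
pose c : coloring G := [ffun x : edge G => match x with
  | inl (inl s) => p1 (val s) | inl (inr s) => pi (p2 (val s)) | inr j => p1 (yf d1 j) end].
have r1 : restrict yemb1 c = p1.
  apply/ffunP=> e; rewrite !ffunE; have [ev|ev] := boolP (inc e v1); last by rewrite (yemb1_out ev).
  by rewrite -(yf_yinv cub1 ev) yemb1_yf.
have r2 : restrict yemb2 c = recolor pi p2.
  apply/ffunP=> e; rewrite !ffunE; have [ev|ev] := boolP (inc e v2); last by rewrite (yemb2_out ev).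
  by rewrite -(yf_yinv cub2 ev) yemb2_yf pi_cut.
exists c; rewrite r1 r2 kempe_refl kempe_sym kempe_recolor; split=> //.
by apply: Ycomp_proper; rewrite ?r1 ?r2 ?proper_recolor.
Qed.

Theorem Kprime_Ycomp : Kprime G = Kprime G1 * Kprime G2.
Proof.
exact: Kprime_glue yemb1_kadj yemb2_kadj yemb1_liftable yemb2_liftable Yrecolor_kempe Yextend.
Qed.

End YComposition.

(** * The H-composition *)

Lemma oends_inc (G : mgraph) (e : edge G) fl u :
  inc e u = (u == (oends e fl).1) || (u == (oends e fl).2).
Proof. by rewrite /inc /oends; case: fl => //=; rewrite orbC. Qed.

Lemma oends_neq (H : mgraph) (e : edge H) fl : cubic H -> (oends e fl).1 != (oends e fl).2.
Proof.
by move=> cub; rewrite /oends; case: fl => /=; rewrite ?(eq_sym (endpt e).2) (cubic_loopless cub).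
Qed.

Section HComposition.
Variables (G1 G2 : mgraph) (e1 : edge G1) (fl1 : bool) (e2 : edge G2) (fl2 : bool).
Hypotheses (cub1 : cubic G1) (cub2 : cubic G2).
Local Notation G := (Hcomp e1 fl1 e2 fl2).
Local Notation s1 b := (if b then (oends e1 fl1).2 else (oends e1 fl1).1).
Local Notation s2 b := (if b then (oends e2 fl2).2 else (oends e2 fl2).1).
Implicit Types (c : coloring G) (x y : edge G).

Definition hemb1 (e : edge G1) : edge G :=
  if (insub e : option {e | e != e1}) is Some s then inl (inl s) else inr false.

Definition hemb2 (e : edge G2) : edge G :=
  if (insub e : option {e | e != e2}) is Some s then inl (inr s) else inr true.

(* inverses of hemb1, hemb2 at the vertices of G1, G2; the two new edges go back to e1, e2 *)
Definition hret1 x : edge G1 := if x is inl (inl s) then val s else e1.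
Definition hret2 x : edge G2 := if x is inl (inr s) then val s else e2.

Lemma hemb1_out e (h : e != e1) : hemb1 e = inl (inl (exist _ e h)).
Proof. by rewrite /hemb1 (insubT (fun e => e != e1) h). Qed.

Lemma hemb2_out e (h : e != e2) : hemb2 e = inl (inr (exist _ e h)).
Proof. by rewrite /hemb2 (insubT (fun e => e != e2) h). Qed.

Lemma hemb1_e1 : hemb1 e1 = inr false.
Proof. by rewrite /hemb1 insubN ?negbK. Qed.

Lemma hemb2_e2 : hemb2 e2 = inr true.
Proof. by rewrite /hemb2 insubN ?negbK. Qed.

Lemma hemb1_inj : injective hemb1.
Proof.
move=> e f; have [-> | ee] := eqVneq e e1; have [-> | fe] := eqVneq f e1 => //.
- by rewrite hemb1_e1 (hemb1_out fe).
- by rewrite hemb1_e1 (hemb1_out ee).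
- by rewrite (hemb1_out ee) (hemb1_out fe) => -[].
Qed.

Lemma hemb2_inj : injective hemb2.
Proof.
move=> e f; have [-> | ee] := eqVneq e e2; have [-> | fe] := eqVneq f e2 => //.
- by rewrite hemb2_e2 (hemb2_out fe).
- by rewrite hemb2_e2 (hemb2_out ee).
- by rewrite (hemb2_out ee) (hemb2_out fe) => -[].
Qed.

Lemma hemb2_not_edge1 e s : (hemb2 e == inl (inl s)) = false.
Proof. by rewrite /hemb2; case: insub. Qed.

Lemma hemb1_not_edge2 e s : (hemb1 e == inl (inr s)) = false.
Proof. by rewrite /hemb1; case: insub. Qed.

Lemma inc_edge1 s u : inc (inl (inl s) : edge G) (inl u : vert G) = inc (val s) u.
Proof. by case: s. Qed.

Lemma inc_edge2 s u : inc (inl (inr s) : edge G) (inr u : vert G) = inc (val s) u.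
Proof. by case: s. Qed.

Lemma inc_edge2_l s u : inc (inl (inr s) : edge G) (inl u : vert G) = false.
Proof. by case: s. Qed.

Lemma inc_edge1_r s u : inc (inl (inl s) : edge G) (inr u : vert G) = false.
Proof. by case: s. Qed.

Lemma inc_new1 b u : inc (inr b : edge G) (inl u : vert G) = (u == s1 b).
Proof. by case: b; rewrite /inc /= orbF. Qed.

Lemma inc_new2 b u : inc (inr b : edge G) (inr u : vert G) = (u == s2 b).
Proof. by case: b; rewrite /inc /=. Qed.

Lemma hret1_inc x u : inc x (inl u : vert G) -> inc (hret1 x) u.
Proof.
case: x => [[s|s] | b]; rewrite ?inc_edge1 ?inc_edge2_l ?inc_new1 //.
by move=> /eqP->; rewrite (oends_inc e1 fl1); case: b; rewrite eqxx ?orbT.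
Qed.

Lemma hret2_inc x u : inc x (inr u : vert G) -> inc (hret2 x) u.
Proof.
case: x => [[s|s] | b]; rewrite ?inc_edge2 ?inc_edge1_r ?inc_new2 //.
by move=> /eqP->; rewrite (oends_inc e2 fl2); case: b; rewrite eqxx ?orbT.
Qed.

Lemma hret1_inj x y u :
  inc x (inl u : vert G) -> inc y (inl u : vert G) -> hret1 x = hret1 y -> x = y.
Proof.
case: x => [[s|s] | b]; case: y => [[s'|s'] | b']; rewrite ?inc_edge2_l ?inc_new1 //=.
- by move=> _ _ ss'; congr (inl (inl _)); apply: val_inj.
- by move=> _ _ se; have := valP s; rewrite /= se eqxx.
- by move=> _ _ se; have := valP s'; rewrite /= -se eqxx.
- move=> /eqP-> /eqP s12 _; case: b b' s12 => [] [] // s12.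
  + by have := oends_neq e1 fl1 cub1; rewrite s12 eqxx.
  + by have := oends_neq e1 fl1 cub1; rewrite s12 eqxx.
Qed.

Lemma hret2_inj x y u :
  inc x (inr u : vert G) -> inc y (inr u : vert G) -> hret2 x = hret2 y -> x = y.
Proof.
case: x => [[s|s] | b]; case: y => [[s'|s'] | b']; rewrite ?inc_edge1_r ?inc_new2 //=.
- by move=> _ _ ss'; congr (inl (inr _)); apply: val_inj.
- by move=> _ _ se; have := valP s; rewrite /= se eqxx.
- by move=> _ _ se; have := valP s'; rewrite /= -se eqxx.
- move=> /eqP-> /eqP s12 _; case: b b' s12 => [] [] // s12.
  + by have := oends_neq e2 fl2 cub2; rewrite s12 eqxx.
  + by have := oends_neq e2 fl2 cub2; rewrite s12 eqxx.
Qed.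

Lemma hret1_onto f u : inc f u -> exists2 x, inc x (inl u : vert G) & hret1 x = f.
Proof.
have [-> | fe] := eqVneq f e1; last by exists (inl (inl (exist _ f fe))); rewrite ?inc_edge1.
by rewrite (oends_inc e1 fl1) => /orP[] /eqP->; [exists (inr false) | exists (inr true)];
  rewrite ?inc_new1.
Qed.

Lemma hret2_onto f u : inc f u -> exists2 x, inc x (inr u : vert G) & hret2 x = f.
Proof.
have [-> | fe] := eqVneq f e2; last by exists (inl (inr (exist _ f fe))); rewrite ?inc_edge2.
by rewrite (oends_inc e2 fl2) => /orP[] /eqP->; [exists (inr false) | exists (inr true)];
  rewrite ?inc_new2.
Qed.

Lemma Hcomp_cubic : cubic G.
Proof.
apply/andP; split.
  apply/forallP=> -[[[e h] | [e h]] | []] //=; exact: cubic_loopless.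
apply/forallP=> -[u | u]; apply/eqP.
  rewrite -(cubic_deg cub1 u) /deg.
  have -> : [set f | inc f u] = hret1 @: [set x | inc x (inl u : vert G)].
    apply/setP=> f; rewrite inE; apply/idP/imsetP => [/hret1_onto[x xu <-] | [x + ->]].
      by exists x; rewrite ?inE.
    by rewrite inE; apply: hret1_inc.
  by rewrite card_in_imset // => x y; rewrite !inE; apply: hret1_inj.
rewrite -(cubic_deg cub2 u) /deg.
have -> : [set f | inc f u] = hret2 @: [set x | inc x (inr u : vert G)].
  apply/setP=> f; rewrite inE; apply/idP/imsetP => [/hret2_onto[x xu <-] | [x + ->]].
    by exists x; rewrite ?inE.
  by rewrite inE; apply: hret2_inc.
by rewrite card_in_imset // => x y; rewrite !inE; apply: hret2_inj.
Qed.

Definition Hleft : {set vert G} := [set w | if w is inl _ then true else false].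

Lemma card_Hcut (P : pred (edge G)) : #|[set x in cut Hleft | P x]| = #|[set b | P (inr b)]|.
Proof.
have inr_inj : injective (fun b => inr b : edge G) by move=> j k [].
rewrite -(card_imset _ inr_inj); apply: eq_card => x; rewrite !inE.
apply/andP/imsetP => [|[j + ->]]; last by rewrite !inE; case: j.
by case: x => [[[e h] | [e h]] | j]; rewrite ?inE //= => -[] // _ Pj; exists j; rewrite ?inE.
Qed.

Lemma Hcut_eq c : proper c -> c (inr false) = c (inr true).
Proof.
move=> pc; apply: (@odd_fibres_const (fun b => c (inr b)) (odd #|Hleft|)) => a.
by rewrite -(odd_cut_color Hcomp_cubic Hleft a pc) card_Hcut.
Qed.

Lemma Hcut_kclosed c a b S : proper c -> a != b -> kclosed c a b S ->
  in_ab a b (c (inr false)) -> (inr false \in S) = (inr true \in S).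
Proof.
move=> pc ab cl af; apply: (even_card_pair (P := fun k => inr k \in S)) => //.
have := even_cut_kclosed Hcomp_cubic Hleft pc ab cl; rewrite card_Hcut.
congr (~~ odd _); apply: eq_card => k; rewrite !inE.
by case: k; rewrite ?(Hcut_eq pc) in af *; rewrite af.
Qed.

Lemma hret1_color c x u : proper c -> inc x (inl u : vert G) -> c x = c (hemb1 (hret1 x)).
Proof.
move=> pc; case: x => [[[e h] | s] | []] /=; rewrite ?inc_edge2_l ?hemb1_e1 ?(hemb1_out h) //.
by rewrite (Hcut_eq pc).
Qed.

Lemma hret2_color c x u : proper c -> inc x (inr u : vert G) -> c x = c (hemb2 (hret2 x)).
Proof.
move=> pc; case: x => [[s | [e h]] | []] /=; rewrite ?inc_edge1_r ?hemb2_e2 ?(hemb2_out h) //.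
by rewrite (Hcut_eq pc).
Qed.

Lemma hret1_mem c a b S x u : proper c -> a != b -> kclosed c a b S ->
  inc x (inl u : vert G) -> in_ab a b (c x) -> (x \in S) = (hemb1 (hret1 x) \in S).
Proof.
move=> pc ab cl; case: x => [[[e h] | s] | []] /=; rewrite ?inc_edge2_l ?hemb1_e1 ?(hemb1_out h) //.
by move=> _ at'; rewrite (Hcut_kclosed pc ab cl) // (Hcut_eq pc).
Qed.

Lemma hret2_mem c a b S x u : proper c -> a != b -> kclosed c a b S ->
  inc x (inr u : vert G) -> in_ab a b (c x) -> (x \in S) = (hemb2 (hret2 x) \in S).
Proof.
move=> pc ab cl; case: x => [[s | [e h]] | []] /=; rewrite ?inc_edge1_r ?hemb2_e2 ?(hemb2_out h) //.
by move=> _ af; rewrite (Hcut_kclosed pc ab cl).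
Qed.

Lemma hemb1_kadj : kadj_embedding hemb1.
Proof.
move=> c pc u e f ef eu fu.
have [x xu ex] := hret1_onto eu; have [y yu fy] := hret1_onto fu; subst e f.
have [cxy clxy] : kadj c x y by apply: (adjacent_kadj pc _ xu yu); apply: contra ef => /eqP->.
rewrite /kadj -(hret1_color pc xu) -(hret1_color pc yu); split=> // a b S ab cl ax ay.
by rewrite -(hret1_mem pc ab cl xu ax) -(hret1_mem pc ab cl yu ay) (clxy a b S).
Qed.

Lemma hemb2_kadj : kadj_embedding hemb2.
Proof.
move=> c pc u e f ef eu fu.
have [x xu ex] := hret2_onto eu; have [y yu fy] := hret2_onto fu; subst e f.
have [cxy clxy] : kadj c x y by apply: (adjacent_kadj pc _ xu yu); apply: contra ef => /eqP->.
rewrite /kadj -(hret2_color pc xu) -(hret2_color pc yu); split=> // a b S ab cl ax ay.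
by rewrite -(hret2_mem pc ab cl xu ax) -(hret2_mem pc ab cl yu ay) (clxy a b S).
Qed.

Lemma hemb1_liftable : kswitch_liftable hemb1 hemb2.
Proof.
move=> c a b T pc ab clT.
have [T' TT' dis] : exists2 T', T' \in [:: T; ~: T] &
    [disjoint [set e | (e == e1) && in_ab a b (c (hemb1 e))] & T'].
  by apply: disjoint_or_compl => e f; rewrite !inE => /andP[/eqP-> _] /andP[/eqP-> _].
have clT' : kclosed (restrict hemb1 c) a b T'.
  by move: TT'; rewrite !inE => /orP[] /eqP->; last apply: kclosedC.
pose S := hemb1 @: (T' :\ e1).
have S_inner x : x \in S -> exists s, x = inl (inl s).
  by case/imsetP=> e; rewrite !inE => /andP[ee _] ->; exists (exist _ e ee); rewrite hemb1_out.
have memS e : in_ab a b (c (hemb1 e)) -> (hemb1 e \in S) = (e \in T').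
  move=> ae; rewrite mem_imset ?inE; last exact: hemb1_inj.
  have [ee | //] := eqVneq e e1; subst e.
  by apply/esym/(disjointFr dis); rewrite inE eqxx.
have S_ret x u : inc x (inl u : vert G) -> (x \in S) = (hemb1 (hret1 x) \in S).
  case: x => [[[e h] | s] | bb]; rewrite ?inc_edge2_l //= => _; first by rewrite (hemb1_out h).
  by rewrite hemb1_e1; apply/idP/idP=> /S_inner[].
exists S, T'; split=> //.
- apply/kclosedP=> -[u|u] x y xu yu ax ay.
    rewrite (hret1_color pc xu) in ax; rewrite (hret1_color pc yu) in ay.
    rewrite (S_ret _ _ xu) (S_ret _ _ yu) !memS //.
    by move/kclosedP: clT' => /(_ u _ _ (hret1_inc xu) (hret1_inc yu)); rewrite !ffunE; apply.
  have notS z : inc z (inr u : vert G) -> z \notin S.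
    by move=> zu; apply/negP=> /S_inner[s zs]; rewrite zs inc_edge1_r in zu.
  by rewrite (negbTE (notS x xu)) (negbTE (notS y yu)).
- apply/ffunP=> e; rewrite !ffunE.
  have [ae|ae] := boolP (in_ab a b (c (hemb1 e))); first by rewrite memS.
  by case: ifP; case: ifP; rewrite ?swap_out.
- apply/ffunP=> f; rewrite !ffunE.
  by case: ifP => // /S_inner[s /eqP]; rewrite hemb2_not_edge1.
Qed.

Lemma hemb2_liftable : kswitch_liftable hemb2 hemb1.
Proof.
move=> c a b T pc ab clT.
have [T' TT' dis] : exists2 T', T' \in [:: T; ~: T] &
    [disjoint [set e | (e == e2) && in_ab a b (c (hemb2 e))] & T'].
  by apply: disjoint_or_compl => e f; rewrite !inE => /andP[/eqP-> _] /andP[/eqP-> _].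
have clT' : kclosed (restrict hemb2 c) a b T'.
  by move: TT'; rewrite !inE => /orP[] /eqP->; last apply: kclosedC.
pose S := hemb2 @: (T' :\ e2).
have S_inner x : x \in S -> exists s, x = inl (inr s).
  by case/imsetP=> e; rewrite !inE => /andP[ee _] ->; exists (exist _ e ee); rewrite hemb2_out.
have memS e : in_ab a b (c (hemb2 e)) -> (hemb2 e \in S) = (e \in T').
  move=> ae; rewrite mem_imset ?inE; last exact: hemb2_inj.
  have [ee | //] := eqVneq e e2; subst e.
  by apply/esym/(disjointFr dis); rewrite inE eqxx.
have S_ret x u : inc x (inr u : vert G) -> (x \in S) = (hemb2 (hret2 x) \in S).
  case: x => [[s | [e h]] | bb]; rewrite ?inc_edge1_r //= => _; first by rewrite (hemb2_out h).
  by rewrite hemb2_e2; apply/idP/idP=> /S_inner[].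
exists S, T'; split=> //.
- apply/kclosedP=> -[u|u] x y xu yu ax ay; last first.
    rewrite (hret2_color pc xu) in ax; rewrite (hret2_color pc yu) in ay.
    rewrite (S_ret _ _ xu) (S_ret _ _ yu) !memS //.
    by move/kclosedP: clT' => /(_ u _ _ (hret2_inc xu) (hret2_inc yu)); rewrite !ffunE; apply.
  have notS z : inc z (inl u : vert G) -> z \notin S.
    by move=> zu; apply/negP=> /S_inner[s zs]; rewrite zs inc_edge2_l in zu.
  by rewrite (negbTE (notS x xu)) (negbTE (notS y yu)).
- apply/ffunP=> e; rewrite !ffunE.
  have [ae|ae] := boolP (in_ab a b (c (hemb2 e))); first by rewrite memS.
  by case: ifP; case: ifP; rewrite ?swap_out.
- apply/ffunP=> f; rewrite !ffunE.
  by case: ifP => // /S_inner[s /eqP]; rewrite hemb1_not_edge2.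
Qed.

(* pi fixes the colour of the cut, so it swaps two colours absent from the cut, which is a
   Kempe switch on the edges of G1 *)
Lemma Hrecolor_kempe c c' (pi : {perm 'I_3}) : proper c -> proper c' ->
  restrict hemb2 c' = restrict hemb2 c ->
  restrict hemb1 c' = recolor pi (restrict hemb1 c) -> kempe_equiv c c'.
Proof.
move=> pc pc' /ffunP r2 /ffunP r1.
have cut b : c' (inr b) = c (inr b).
  have := r2 e2; rewrite !ffunE hemb2_e2 => ct.
  by case: b; rewrite // (Hcut_eq pc) (Hcut_eq pc') ct.
have pix : pi (c (inr false)) = c (inr false) by have := r1 e1; rewrite !ffunE hemb1_e1 cut.
have [y [z [yx zx piE]]] := perm3_fix pix.
pose L := [set x : edge G | if x is inl (inl _) then true else false].
have -> : c' = switch c y z L.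
  apply/ffunP=> -[[s | s] | bb]; rewrite ffunE inE ?cut //.
    by have := r1 (val s); rewrite !ffunE -piE; case: s => e h; rewrite (hemb1_out h).
  by have := r2 (val s); rewrite !ffunE; case: s => e h; rewrite (hemb2_out h).
apply: kempe_switch; apply/kclosedP=> -[u|u] x x' xu x'u; last first.
  by case: x xu => [[s|s] | bb]; case: x' x'u => [[s'|s'] | bb']; rewrite ?inc_edge1_r ?inE.
have inL w : inc w (inl u : vert G) -> in_ab y z (c w) -> w \in L.
  case: w => [[s|s] | bb]; rewrite ?inc_edge2_l ?inE // => _.
  have -> : c (inr bb) = c (inr false) by case: bb; rewrite -?(Hcut_eq pc).
  by rewrite /in_ab !inE !(eq_sym (c _)) (negbTE yx) (negbTE zx).
by move=> ax ax'; rewrite (inL x xu ax) (inL x' x'u ax').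
Qed.

Lemma Hcomp_proper c (q1 : coloring G1) (q2 : coloring G2) : proper q1 -> proper q2 ->
  (forall u x, inc x (inl u : vert G) -> c x = q1 (hret1 x)) ->
  (forall u x, inc x (inr u : vert G) -> c x = q2 (hret2 x)) -> proper c.
Proof.
move=> /properP pq1 /properP pq2 cq1 cq2.
apply/properP=> x y /adjacentP[xy [[u|u] [xu yu]]].
  rewrite (cq1 _ _ xu) (cq1 _ _ yu); apply: pq1; apply/adjacentP; split.
    by apply: contra xy => /eqP/(hret1_inj xu yu)->.
  by exists u; rewrite !hret1_inc.
rewrite (cq2 _ _ xu) (cq2 _ _ yu); apply: pq2; apply/adjacentP; split.
  by apply: contra xy => /eqP/(hret2_inj xu yu)->.
by exists u; rewrite !hret2_inc.
Qed.

Lemma Hextend p1 p2 : proper p1 -> proper p2 ->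
  exists c, [/\ proper c, kempe_equiv (restrict hemb1 c) p1 & kempe_equiv (restrict hemb2 c) p2].
Proof.
move=> pp1 pp2; pose pi := tperm (p2 e2) (p1 e1).
pose c : coloring G := [ffun x : edge G => match x with
  | inl (inl s) => p1 (val s) | inl (inr s) => pi (p2 (val s)) | inr _ => p1 e1 end].
have r1 : restrict hemb1 c = p1.
  apply/ffunP=> e; rewrite !ffunE; have [-> | ee] := eqVneq e e1; first by rewrite hemb1_e1.
  by rewrite (hemb1_out ee).
have r2 : restrict hemb2 c = recolor pi p2.
  apply/ffunP=> e; rewrite !ffunE; have [-> | ee] := eqVneq e e2; first by rewrite hemb2_e2 tpermL.
  by rewrite (hemb2_out ee).
exists c; rewrite r1 r2 kempe_refl kempe_sym kempe_recolor; split=> //.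
apply: (Hcomp_proper pp1 (proper_recolor pi pp2)) => u [[s|s] | b];
  by rewrite ?inc_edge2_l ?inc_edge1_r // !ffunE //= tpermL.
Qed.

Theorem Kprime_Hcomp : Kprime G = Kprime G1 * Kprime G2.
Proof.
exact: Kprime_glue hemb1_kadj hemb2_kadj hemb1_liftable hemb2_liftable Hrecolor_kempe Hextend.
Qed.

End HComposition.

Theorem theorem12 (G1 G2 : mgraph) (a b : nat) :
  cubic G1 -> cubic G2 -> Kprime G1 = a -> Kprime G2 = b ->
  (forall (d1 : ydata G1) (d2 : ydata G2), Kprime (Ycomp d1 d2) = a * b) /\
  (forall (e1 : edge G1) (flip1 : bool) (e2 : edge G2) (flip2 : bool),
      Kprime (Hcomp e1 flip1 e2 flip2) = a * b).
Proof.
move=> cub1 cub2 <- <-; split=> [d1 d2 | e1 fl1 e2 fl2]; first exact: Kprime_Ycomp.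
exact: Kprime_Hcomp.
Qed.
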